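(* Let $G$ and $N$ be finite groups of the same order such that $\mathcal{E}'(G,N)$ is non-empty. Let $\mathcal{M}(N)=\{|M|: M \text{ is a characteristic subgroup of } N\}$ and $\mathcal{H}(G)=\{|H|: H \text{ is a subgroup of } G\}$. Then $\mathcal{M}(N)\subseteq\mathcal{H}(G)$. Also, $G$ has a solvable subgroup whose order equals $|\mathrm{Fit}(N)|$.
   Context: $\mathrm{Fit}(N)$ is the Fitting subgroup of $N$, the unique largest normal nilpotent subgroup of $N$. For a finite group $N$, let $\mathrm{Perm}(N)$ be the group of all permutations of the set $N$. A subgroup $\mathcal{G}\le \mathrm{Perm}(N)$ is regular if the map $\mathcal{G}\to N$, $\sigma\mapsto\sigma(1_N)$, is bijective. Let $\rho:N\to\mathrm{Perm}(N)$, $\rho(\eta)(x)=x\eta^{-1}$. The holomorph of $N$ is $\mathrm{Hol}(N)=\rho(N)\rtimes\mathrm{Aut}(N)\le\mathrm{Perm}(N)$. For a group $G$ with $|G|=|N|$, $\mathcal{E}'(G,N)$ denotes the set of regular subgroups of $\mathrm{Hol}(N)$ isomorphic to $G$. *)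

From HB Require Import structures.
From mathcomp Require Import all_boot all_fingroup all_solvable.
Set Implicit Arguments. Unset Strict Implicit. Unset Printing Implicit Defensive.
Import GroupScope.

(* A finite group N is represented by the full finGroupType nT (N = [set: nT]);
   Perm(N) = {perm nT}. *)

Definition rho_perm (nT : finGroupType) (eta : nT) : {perm nT} :=
  perm (mulIg eta^-1).

Definition Hol (nT : finGroupType) : {set {perm nT}} :=
  ((@rho_perm nT @: [set: nT]) * Aut [set: nT])%g.

Definition regular (nT : finGroupType) (S : {set {perm nT}}) : Prop :=
  {in S &, injective (fun s : {perm nT} => s (1 : nT))} /\
  [set (s : {perm nT}) (1 : nT) | s in S] = [set: nT].

Definition Eprime_nonempty (gT nT : finGroupType) : Prop :=
  exists S : {group {perm nT}},
    [/\ S \subset Hol nT, regular S & [set: gT] \isog S].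

From mathcomp Require Import all_boot all_fingroup all_solvable.
From mathcomp Require integral_char.
Set Implicit Arguments.
Unset Strict Implicit.
Unset Printing Implicit Defensive.
Import GroupScope.

(* Let S <= Hol(N) be regular with S ~ G.  An element of Hol(N) is
   x |-> a(x) a(eta)^-1 with a in Aut(N), so it maps a characteristic subgroup
   M into itself iff it maps 1 into M; by regularity the stabiliser S_M of M
   in S therefore has order |M|.  For F = Fit(N) and every prime p, the
   characteristic p'-Hall subgroup O_p'(F) of the nilpotent group F yields a
   p'-Hall subgroup S_(O_p'(F)) of S_F, so S_F is solvable by P. Hall's
   converse theorem: a group having a p'-Hall subgroup for every prime p is
   solvable. *)

Lemma prime_avoiding_pair n p s :
  2 < size (primes n) -> exists2 t, t \in primes n & (t != p) && (t != s).
Proof.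
move=> gt2; apply/hasP; apply: contraLR gt2 => /hasPn avoid; rewrite -leqNgt.
apply: (leq_trans (uniq_leq_size (primes_uniq n) (s2 := [:: p; s]) _)) => //.
by move=> t /avoid; rewrite negb_and !negbK !inE orbC.
Qed.

Definition has_p'Halls (gT : finGroupType) (G : {set gT}) :=
  forall p, prime p -> exists H : {group gT}, p^'.-Hall(G) H.

Section HallConverse.

Variable gT : finGroupType.
Implicit Types (G H K M N : {group gT}) (p q : nat).

Lemma p'Hall_mulg G H K p q : p != q ->
  p^'.-Hall(G) H -> q^'.-Hall(G) K -> K * H = G.
Proof.
move=> npq hallH hallK; have [sHG _ iH] := and3P hallH.
have [sKG _ iK] := and3P hallK; rewrite pnatNK in iH iK.
apply: coprime_index_mulG => //; apply: pnat_coprime iK _.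
by apply: sub_in_pnat iH => r _; rewrite !inE => /eqnP->; rewrite negbK.
Qed.

Lemma p'Hall_setI G H K p q : p != q ->
  p^'.-Hall(G) H -> q^'.-Hall(G) K -> q^'.-Hall(H) (H :&: K).
Proof.
move=> npq hallH hallK; have [_ q'K _] := and3P hallK.
rewrite /pHall subsetIl (pgroupS (subsetIr _ _) q'K) indexgI -indexMg.
by rewrite (p'Hall_mulg npq hallH hallK); case/and3P: hallK.
Qed.

Lemma has_p'Halls_p'Hall G H p :
  has_p'Halls G -> p^'.-Hall(G) H -> has_p'Halls H.
Proof.
move=> hallsG hallH q q_pr; have [->|nqp] := eqVneq q p.
  exists H; rewrite pHallE subxx part_pnat_id ?eqxx //.
  exact: (pHall_pgroup hallH).
have [K hallK] := hallsG q q_pr; exists (H :&: K)%G.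
by apply: p'Hall_setI hallH hallK; rewrite eq_sym.
Qed.

Lemma card_p'Hall_lt G H p : p \in \pi(G) -> p^'.-Hall(G) H -> #|H| < #|G|.
Proof.
move=> piGp hallH; rewrite (card_Hall hallH) -{2}(partnC p (cardG_gt0 G)).
by rewrite ltn_Pmull ?part_gt0 ?p_part_gt1.
Qed.

Lemma p'Hall_neq1 G H p q : q \in \pi(G) -> q != p ->
  p^'.-Hall(G) H -> H :!=: 1.
Proof.
move=> piGq nqp hallH; rewrite -cardG_gt1 (card_Hall hallH).
apply: leq_trans (dvdn_leq (part_gt0 _ _) (dvdn_part q _)).
by rewrite partn_part ?p_part_gt1 // => r; rewrite !inE => /eqnP->.
Qed.

Lemma gen_class_support_sub G H K N :
  N <| K -> N \subset H -> K * H = G -> <<class_support N G>> \subset H.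
Proof.
move=> /normal_norm nNK sNH defG; rewrite gen_subG -defG class_supportM.
rewrite class_support_sub_norm ?normG // (subset_trans _ sNH) //.
exact: class_support_sub_norm.
Qed.

Lemma has_p'Halls_quotient G M :
  has_p'Halls G -> G \subset 'N(M) -> has_p'Halls (G / M).
Proof.
move=> hallsG nMG p p_pr; have [K hallK] := hallsG p p_pr.
exists (K / M)%G.
exact: quotient_pHall (subset_trans (pHall_sub hallK) nMG) hallK.
Qed.

End HallConverse.

(* Three primes divide |G|.  A minimal normal subgroup N of a p'-Hall
   subgroup Hp (solvable by induction) is an s-group; choosing t <> p, s, the
   subgroup N lies in a t'-Hall subgroup Ht, and as G = Hp Ht its normal
   closure M in G stays inside the solvable group Ht.  The quotient G / M
   inherits the p'-Hall subgroups and is solvable by induction. *)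
Theorem has_p'Halls_solvable gT (G : {group gT}) : has_p'Halls G -> solvable G.
Proof.
move: {2}_.+1 (ltnSn #|G|) => n; elim: n gT G => // n IHn gT G.
rewrite ltnS => leGn hallsG.
have [/integral_char.Burnside_p_a_q_b// | gt2] := leqP (size (primes #|G|)) 2.
have solHall p (H : {group gT}) : p \in \pi(G) -> p^'.-Hall(G) H -> solvable H.
  move=> piGp hallH; apply: IHn (leq_trans (card_p'Hall_lt piGp hallH) leGn) _.
  exact: has_p'Halls_p'Hall hallH.
have pi_pr r : r \in \pi(G) -> prime r by rewrite mem_primes => /andP[].
have [p piGp _] := prime_avoiding_pair 0 0 gt2.
have [q piGq /andP[nqp _]] := prime_avoiding_pair p p gt2.
have [Hp hallHp] := hallsG p (pi_pr _ piGp).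
have solHp := solHall p Hp piGp hallHp.
have [N [sNHp nsNHp ntN abelN]] :=
  solvable_norm_abelem solHp (normal_refl Hp) (p'Hall_neq1 piGq nqp hallHp).
have [t piGt /andP[ntp nts]] := prime_avoiding_pair p (pdiv #|N|) gt2.
have [Ht hallHt] := hallsG t (pi_pr _ piGt).
have sNHt : N \subset Ht.
  have npt : p != t by rewrite eq_sym.
  have hallHpt := p'Hall_setI npt hallHp hallHt.
  apply: subset_trans (subsetIr Hp _); apply: normal_sub_max_pgroup nsNHp.
    exact: Hall_max hallHpt.
  by apply: sub_pgroup (abelem_pgroup abelN) => r /eqnP->; rewrite !inE eq_sym.
set M := <<class_support N G>>.
have sMHt : M \subset Ht.
  exact: gen_class_support_sub nsNHp sNHt (p'Hall_mulg ntp hallHt hallHp).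
have sNG : N \subset G := subset_trans sNHp (pHall_sub hallHp).
have nsMG : M <| G.
  by rewrite /normal gen_subG class_support_subG ?norms_gen ?class_support_norm.
have ntM : M != 1.
  exact: subG1_contra (subset_trans (sub_class_support G N) (subset_gen _)) ntN.
rewrite (series_sol nsMG) (solvableS sMHt (solHall t Ht piGt hallHt)).
apply: IHn (has_p'Halls_quotient hallsG (normal_norm nsMG)).
exact: leq_trans (ltn_quotient ntM (normal_sub nsMG)) leGn.
Qed.

Section RegularHolomorph.

Variable nT : finGroupType.
Implicit Types (M K : {group nT}) (S : {group {perm nT}}).

Lemma Hol_astabsP M s : M \char [set: nT] -> s \in Hol nT ->
  (s \in 'N(M | 'P)) = (s 1 \in M).
Proof.
move=> charM Hol_s; rewrite /astabs !inE /=.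
apply/subsetP/idP => [sM | Ms1 x Mx].
  by have := sM 1 (group1 M); rewrite inE.
rewrite inE /=; case/mulsgP: Hol_s Ms1 => _ a /imsetP[eta _ ->] AutNa ->.
have morph_a := morphicP (Aut_morphic AutNa).
have a1 : a 1 = 1 by rewrite -(autmE AutNa) morph1.
rewrite !permM !permE !morph_a ?inE // a1 mul1g => Ma_eta.
have /andP[_ /forall_inP autM] := charM.
rewrite apermE permM !permE morph_a ?inE // groupMr //.
by rewrite (subsetP (autM a AutNa)) ?imset_f.
Qed.

Lemma card_regular_preimset S (A : {set nT}) :
  regular S -> #|[set s in S | s 1 \in A]| = #|A|.
Proof.
case=> injS imS; rewrite -(card_in_imset (f := fun s : {perm nT} => s 1)).
  apply: eq_card => x; apply/imsetP/idP => [[s /setIdP[_ ?] ->] // | Ax].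
  have /imsetP[s Ss xE] : x \in [set (s : {perm nT}) 1 | s in S].
    by rewrite imS inE.
  by exists s; rewrite // inE Ss -xE.
by move=> s1 s2 /setIdP[Ss1 _] /setIdP[Ss2 _]; apply: injS.
Qed.

Variable S : {group {perm nT}}.
Hypotheses (sSHol : S \subset Hol nT) (regS : regular S).

Lemma card_regular_astabs M : M \char [set: nT] -> #|S :&: 'N(M | 'P)| = #|M|.
Proof.
move=> charM; rewrite -(card_regular_preimset M regS); apply: eq_card => s.
by apply/setIP/setIdP=> -[Ss]; rewrite Hol_astabsP ?(subsetP sSHol s Ss).
Qed.

Lemma pHall_regular_astabs pi M K : M \char [set: nT] -> K \char [set: nT] ->
  pi.-Hall(K) M -> pi.-Hall(S :&: 'N(K | 'P)) (S :&: 'N(M | 'P)).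
Proof.
move=> charM charK /pHallP[sMK cardM].
apply/pHallP; rewrite !card_regular_astabs //; split=> //.
apply/subsetP => s /setIP[Ss]; have Hol_s := subsetP sSHol s Ss.
rewrite Hol_astabsP // => /(subsetP sMK) Ks1.
by apply/setIP; rewrite Hol_astabsP.
Qed.

Lemma solvable_regular_astabs_Fitting :
  solvable (S :&: 'N('F([set: nT]) | 'P)).
Proof.
apply: has_p'Halls_solvable => p _.
exists (S :&: 'N('O_p^'('F([set: nT])) | 'P))%G.
apply: pHall_regular_astabs (Fitting_char _) _.
  exact: char_trans (pcore_char _ _) (Fitting_char _).
exact: nilpotent_pcore_Hall (Fitting_nil _).
Qed.

End RegularHolomorph.

Unset Implicit Arguments.

Theorem proposition6p1 (gT nT : finGroupType) :
  #|gT| = #|nT| ->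
  Eprime_nonempty gT nT ->
  (forall M : {group nT}, M \char [set: nT] ->
     exists H : {group gT}, #|H| = #|M|) /\
  (exists H : {group gT}, solvable H /\ #|H| = #|'F([set: nT])|).
Proof.
move=> _ [S [sSHol regS isoGS]].
have [f injf imf] := isogP (isog_symr isoGS).
have card_im (M : {group nT}) :
    M \char [set: nT] -> #|f @* (S :&: 'N(M | 'P))| = #|M|.
  by move=> charM; rewrite card_injm ?subsetIl ?card_regular_astabs.
split=> [M charM | ].
  by exists (f @* (S :&: 'N(M | 'P)))%G; apply: card_im.
exists (f @* (S :&: 'N('F([set: nT]) | 'P)))%G.
by rewrite morphim_sol ?solvable_regular_astabs_Fitting ?card_im ?Fitting_char.
Qed.
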